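(* Let $X$, $Y_k$ ($k\in\mathbb N$) and norms $\|\cdot\|_{X\oplus Y_k}$ be as in the generalized $\ell^2$-sum setting. Let $P_X:X\to X$ and $P_{Y_k}:Y_k\to Y_k$ ($k\in\mathbb N$) be projections such that the operator $P_X+P_{Y_k}:x+y_k\mapsto P_Xx+P_{Y_k}y_k$ satisfies $\|P_X+P_{Y_k}\|_{X\oplus Y_k}\le1$ for every $k$. (A) The projection $P:x+\sum_k y_k\mapsto P_Xx+\sum_kP_{Y_k}y_k$ on $\Sigma(X\oplus Y_k)$ satisfies $\|P\|_\Sigma\le1$. (B) For every $z\in\Sigma(P_XX\oplus P_{Y_k}Y_k)$ we have $\|z\|_{\Sigma(P_XX\oplus P_{Y_k}Y_k)}=\|z\|_{\Sigma(X\oplus Y_k)}$, where $\Sigma(P_XX\oplus P_{Y_k}Y_k)$ is formed from the spaces $P_XX$, $P_{Y_k}Y_k$ with the restricted norms and the restrictions of $\|\cdot\|_{X\oplus Y_k}$ to $P_XX\oplus P_{Y_k}Y_k$.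
   Context: Setting: $(X,\|\cdot\|_X)$ and $(Y_k,\|\cdot\|_{Y_k})$, $k\in\mathbb N$, are Banach spaces; for each $k$, $\|\cdot\|_{X\oplus Y_k}$ is a norm on $X\oplus Y_k$ coinciding with $\|\cdot\|_X$ on $X$ and with $\|\cdot\|_{Y_k}$ on $Y_k$, and monotone: $\|x+y_k\|_{X\oplus Y_k}\ge\|x\|_X$. Duals of direct sums are identified with direct sums of duals via $(x^*+y^* )(x+y)=x^*(x)+y^*(y)$. $\Lambda(X\oplus Y_k)$ is the set of functionals $x^*+\sum_k\alpha_ky_k^*$ with $x^*\in X^*$, $y_k^*\in Y_k^*$, $\|x^*+y_k^*\|_{X\oplus Y_k}\le1$ for all $k$, $0\le\alpha_k\le1$, $\sum\alpha_k^2\le1$. $\Sigma(X\oplus Y_k)=\{x+y_1+y_2+\dots:x\in X,y_k\in Y_k,\sum\|y_k\|_{Y_k}^2<\infty\}$ with $\|z\|_\Sigma=\|z\|_{\Sigma(X\oplus Y_k)}=\sup\{|z^*(z)|:z^*\in\Lambda(X\oplus Y_k)\}$. *)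

From HB Require Import structures.
From mathcomp Require Import all_boot all_order all_algebra.
From mathcomp Require Import all_classical all_reals all_analysis.
Set Implicit Arguments. Unset Strict Implicit. Unset Printing Implicit Defensive.
Import Order.TTheory GRing.Theory Num.Theory.
Import numFieldNormedType.Exports.
Local Open Scope classical_set_scope.
Local Open Scope ring_scope.

Section Defs.
Variable R : realType.

(* n is a norm on the (algebraic) direct sum X (+) Y, presented as a function
   of the two components. *)
Definition is_sum_norm (X Y : normedModType R) (n : X -> Y -> R) : Prop :=
  [/\ (forall x y, 0 <= n x y),
      (forall x y, n x y = 0 -> x = 0 /\ y = 0),
      (forall (a : R) x y, n (a *: x) (a *: y) = `|a| * n x y) &
      (forall x1 y1 x2 y2, n (x1 + x2) (y1 + y2) <= n x1 y1 + n x2 y2)].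

Definition gen_l2_setting (X : normedModType R) (Y : nat -> normedModType R)
  (N : forall k, X -> Y k -> R) : Prop :=
  forall k, [/\ is_sum_norm (N k),
     (forall x, N k x 0 = `|x|),
     (forall y, N k 0 y = `|y|) &
     (forall x y, `|x| <= N k x y)].

Definition linear_on (X : normedModType R) (V : set X) (f : X -> R) : Prop :=
  forall (a : R) x y, V x -> V y -> f (a *: x + y) = a * f x + f y.

Definition sq_summable (Y : nat -> normedModType R) (y : forall k, Y k) : Prop :=
  (\sum_(0 <= k <oo) ((`|y k| ^+ 2)%:E) < +oo)%E.

(* Lambda(V (+) W_k): functionals x^* + sum_k alpha_k y_k^* where x^* is a
   linear functional on the subspace V of X, y_k^* a linear functional on the
   subspace W_k of Y_k, with dual norm ||x^* + y_k^*||_{V (+) W_k} <= 1 for all k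
   (dual norm taken w.r.t. the restriction of N k to V (+) W_k), 0 <= alpha_k <= 1
   and sum alpha_k^2 <= 1.  For V = setT, W_k = setT this is Lambda(X (+) Y_k). *)
Definition Lambda (X : normedModType R) (Y : nat -> normedModType R)
  (N : forall k, X -> Y k -> R) (V : set X) (W : forall k, set (Y k))
  (xs : X -> R) (ys : forall k, Y k -> R) (alpha : nat -> R) : Prop :=
  [/\ linear_on V xs,
      (forall k, linear_on (W k) (ys k)),
      (forall k x y, V x -> W k y -> N k x y <= 1 -> `|xs x + ys k y| <= 1),
      (forall k, 0 <= alpha k <= 1) &
      (\sum_(0 <= k <oo) ((alpha k ^+ 2)%:E) <= 1)%E].

(* value of x^* + sum_k alpha_k y_k^* at z = x + y_1 + y_2 + ... *)
Definition Lambda_eval (X : normedModType R) (Y : nat -> normedModType R)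
  (xs : X -> R) (ys : forall k, Y k -> R) (alpha : nat -> R)
  (x : X) (y : forall k, Y k) : R :=
  xs x + limn (series (fun k => alpha k * ys k (y k))).

Definition sigma_norm (X : normedModType R) (Y : nat -> normedModType R)
  (N : forall k, X -> Y k -> R) (V : set X) (W : forall k, set (Y k))
  (x : X) (y : forall k, Y k) : R :=
  sup [set r : R | exists xs ys alpha, Lambda N V W xs ys alpha /\
                     r = `|Lambda_eval xs ys alpha x y| ].

End Defs.

From HB Require Import structures.
From mathcomp Require Import all_boot all_order all_algebra.
From mathcomp Require Import all_classical all_reals all_analysis.
From mathcomp Require Import lra.
Import Order.TTheory GRing.Theory Num.Theory.
Import numFieldNormedType.Exports.
Local Open Scope classical_set_scope.
Local Open Scope ring_scope.

(* A functional in Lambda composed with the contraction P = P_X + P_{Y_k} is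
   again in Lambda, and takes at z the value the original one takes at P z;
   hence every value defining ||P z||_Sigma is also a value defining ||z||_Sigma,
   which gives (A).  For (B), functionals on the ranges extend to the whole
   spaces by composition with the projections, while global functionals
   restrict to the ranges, so both suprema run over the same set of values.
   The only analysis needed is that these suprema exist: by AM-GM,
   |sum_k alpha_k y_k^*(y_k)| <= (sum_k alpha_k^2 + sum_k ||y_k||^2) / 2. *)

Section LinearOn.
Variables (R : realType) (X : normedModType R).

Lemma linear_on0 (f : X -> R) : linear_on setT f -> f 0 = 0.
Proof. by move=> lf; have := lf 1 0 0 I I; rewrite scale1r addr0 mul1r => f0; lra. Qed.

Lemma linear_onZ (f : X -> R) a x : linear_on setT f -> f (a *: x) = a * f x.
Proof. by move=> lf; have := lf a x 0 I I; rewrite addr0 linear_on0 // addr0. Qed.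

Lemma linear_on_sub (U V : set X) (f : X -> R) :
  U `<=` V -> linear_on V f -> linear_on U f.
Proof. by move=> UV lf a x y /UV Vx /UV Vy; exact: lf. Qed.

Lemma linear_on_comp (V : set X) (f : X -> R) (g : {linear X -> X}) (U : set X) :
  (forall x, V (g x)) -> linear_on V f -> linear_on U (f \o g).
Proof. by move=> gV lf a x y _ _ /=; rewrite linearP lf. Qed.

Lemma linear_on_norm_le (f : X -> R) :
  linear_on setT f -> (forall x, `|x| <= 1 -> `|f x| <= 1) ->
  forall x, `|f x| <= `|x|.
Proof.
move=> lf f1 x; have [->|x0] := eqVneq x 0; first by rewrite linear_on0 ?normr0.
have nx0 : 0 < `|x| by rewrite normr_gt0.
have := f1 (`|x|^-1 *: x).
rewrite normrZ normfV normr_id mulVf ?gt_eqF // lexx => /(_ isT).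
by rewrite linear_onZ // normrM normfV normr_id ler_pdivrMl // mulr1.
Qed.

End LinearOn.

Section NonnegSeries.
Variable R : realType.

Lemma nneseries_partial_le (a : nat -> R) (M : R) : (forall k, 0 <= a k) ->
  (\sum_(0 <= k <oo) (a k)%:E <= M%:E)%E -> forall n, \sum_(0 <= k < n) a k <= M.
Proof.
move=> a0 aM n; rewrite -lee_fin -sumEFin; apply: le_trans aM.
by apply: nneseries_lim_ge => k _ _; rewrite lee_fin.
Qed.

Lemma nneseries_fin_partial_bounded (a : nat -> R) : (forall k, 0 <= a k) ->
  (\sum_(0 <= k <oo) (a k)%:E < +oo)%E ->
  exists M, forall n, \sum_(0 <= k < n) a k <= M.
Proof.
move=> a0 afin; exists (fine (\sum_(0 <= k <oo) (a k)%:E)).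
apply: nneseries_partial_le => //; rewrite fineK // ge0_fin_numE //.
by apply: nneseries_ge0 => k _ _; rewrite lee_fin.
Qed.

Lemma cvg_series_le_half_sqr (u a b : nat -> R) (A B : R) :
  (forall k, `|u k| <= (a k ^+ 2 + b k ^+ 2) / 2) ->
  (forall n, \sum_(0 <= k < n) a k ^+ 2 <= A) ->
  (forall n, \sum_(0 <= k < n) b k ^+ 2 <= B) ->
  cvgn (series u) /\ `|limn (series u)| <= (A + B) / 2.
Proof.
move=> uab aA bB.
have normed_le n : [normed series u] n <= (A + B) / 2.
  apply: le_trans (ler_sum _ (fun k _ => uab k)) _.
  by rewrite -mulr_suml big_split ler_pM2r ?invr_gt0 ?ltr0n ?lerD.
have cvg_normed : cvgn [normed series u].
  apply: nondecreasing_is_cvgn.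
    by apply: nondecreasing_series => k _ _; exact: normr_ge0.
  by exists ((A + B) / 2) => _ [n _ <-].
split; first exact: normed_cvg cvg_normed.
apply: le_trans (lim_series_norm cvg_normed) _.
by apply: limr_le => //; exact: nearW.
Qed.

End NonnegSeries.

Section SigmaNorm.
Variables (R : realType) (X : normedModType R) (Y : nat -> normedModType R)
  (N : forall k, X -> Y k -> R).
Hypothesis hN : gen_l2_setting N.

Definition Lambda_values (V : set X) (W : forall k, set (Y k))
  (x : X) (y : forall k, Y k) : set R :=
  [set r | exists xs ys alpha, Lambda N V W xs ys alpha /\
             r = `|Lambda_eval xs ys alpha x y|].

Lemma Lambda0 V W : Lambda N V W (fun _ => 0) (fun _ _ => 0) (fun _ => 0).
Proof.
split=> [a u v _ _|k a u v _ _|k u v _ _ _|k|].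
- by rewrite mulr0 addr0.
- by rewrite mulr0 addr0.
- by rewrite addr0 normr0.
- by rewrite lexx ler01.
- by rewrite eseries0 ?lee01 // => k _ _; rewrite expr0n.
Qed.

Lemma Lambda_values_nonempty V W x y : Lambda_values V W x y !=set0.
Proof.
by eexists; exists (fun _ => 0), (fun _ _ => 0), (fun _ => 0); split; first exact: Lambda0.
Qed.

Section DualBounds.
Variables (xs : X -> R) (ys : forall k, Y k -> R) (alpha : nat -> R).
Hypothesis hL : Lambda N setT (fun _ => setT) xs ys alpha.

Lemma Lambda_xs_norm_le x : `|xs x| <= `|x|.
Proof.
have [lx ly xy1 _ _] := hL; have [_ Nx0 _ _] := hN 0%N.
apply: linear_on_norm_le => // u u1.
by have := xy1 0%N u 0 I I; rewrite Nx0 linear_on0 // addr0; exact.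
Qed.

Lemma Lambda_ys_norm_le k v : `|ys k v| <= `|v|.
Proof.
have [lx ly xy1 _ _] := hL; have [_ _ N0y _] := hN k.
apply: linear_on_norm_le => // u u1.
by have := xy1 k 0 u I I; rewrite N0y linear_on0 // add0r; exact.
Qed.

Lemma Lambda_eval_le (M : R) x (y : forall k, Y k) :
  (forall n, \sum_(0 <= k < n) `|y k| ^+ 2 <= M) ->
  `|Lambda_eval xs ys alpha x y| <= `|x| + (1 + M) / 2.
Proof.
move=> yM; have [_ _ _ alpha01 alpha_sqr] := hL.
have amgm k : `|alpha k * ys k (y k)| <= (alpha k ^+ 2 + `|y k| ^+ 2) / 2.
  have /andP[a0 _] := alpha01 k.
  have : alpha k * `|ys k (y k)| <= alpha k * `|y k|.
    by rewrite ler_wpM2l // Lambda_ys_norm_le.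
  have := sqr_ge0 (alpha k - `|y k|); rewrite normrM (ger0_norm a0) sqrrB; lra.
have alpha_partial : forall n, \sum_(0 <= k < n) alpha k ^+ 2 <= 1.
  by apply: nneseries_partial_le => // k; exact: sqr_ge0.
have [_ series_le] := @cvg_series_le_half_sqr _ _ _ _ _ _ amgm alpha_partial yM.
by apply: le_trans (ler_normD _ _) _; rewrite lerD ?Lambda_xs_norm_le.
Qed.

End DualBounds.

Lemma Lambda_values_has_sup x y : sq_summable y ->
  has_sup (Lambda_values setT (fun _ => setT) x y).
Proof.
move=> /(@nneseries_fin_partial_bounded R _ (fun k => sqr_ge0 _)) [M yM].
split; first exact: Lambda_values_nonempty.
exists (`|x| + (1 + M) / 2) => _ [xs [ys [alpha [hL ->]]]].
exact: Lambda_eval_le.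
Qed.

Section Projections.
Variables (PX : {linear X -> X}) (PY : forall k, {linear Y k -> Y k}).
Hypothesis P_contraction : forall k x y, N k (PX x) (PY k y) <= N k x y.

Lemma Lambda_comp V W xs ys alpha :
  (forall x, V (PX x)) -> (forall k y, W k (PY k y)) ->
  Lambda N V W xs ys alpha ->
  Lambda N setT (fun _ => setT) (xs \o PX) (fun k => ys k \o PY k) alpha.
Proof.
move=> PXV PYW [lx ly xy1 alpha01 alpha_sqr]; split=> //.
- exact: linear_on_comp lx.
- by move=> k; exact: linear_on_comp (ly k).
- by move=> k u v _ _ uv1; apply: xy1 => //; exact: le_trans uv1.
Qed.

Lemma Lambda_restrict V W xs ys alpha :
  Lambda N setT (fun _ => setT) xs ys alpha -> Lambda N V W xs ys alpha.
Proof.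
case=> lx ly xy1 alpha01 alpha_sqr; split=> //.
- exact: linear_on_sub lx.
- by move=> k; exact: linear_on_sub (ly k).
- by move=> k u v _ _; exact: xy1.
Qed.

Lemma sq_summable_proj y : sq_summable y -> sq_summable (fun k => PY k (y k)).
Proof.
apply: le_lt_trans; apply: lee_nneseries => [k _ _|k _]; first exact: sqr_ge0.
have [_ _ N0y _] := hN k; have := P_contraction k 0 (y k).
by rewrite linear0 !N0y lee_fin ler_sqr ?nnegrE.
Qed.

Lemma sigma_norm_proj_le x y : sq_summable y ->
  sigma_norm N setT (fun _ => setT) (PX x) (fun k => PY k (y k))
    <= sigma_norm N setT (fun _ => setT) x y.
Proof.
move=> y_sq; apply: ge_sup; first exact: Lambda_values_nonempty.
move=> _ [xs [ys [alpha [hL ->]]]].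
apply: sup_upper_bound; first exact: Lambda_values_has_sup.
exists (xs \o PX), (fun k => ys k \o PY k), alpha; split=> //.
exact: Lambda_comp hL.
Qed.

Hypotheses (PX_idem : forall x, PX (PX x) = PX x)
  (PY_idem : forall k y, PY k (PY k y) = PY k y).

Lemma sigma_norm_range x y : range PX x -> (forall k, range (PY k) (y k)) ->
  sigma_norm N (range PX) (fun k => range (PY k)) x y
    = sigma_norm N setT (fun _ => setT) x y.
Proof.
move=> [x' _ <-] y_range; rewrite /sigma_norm; congr sup.
have PY_y k : PY k (y k) = y k by have [y' _ <-] := y_range k; rewrite PY_idem.
apply/seteqP; split=> _ [xs [ys [alpha [hL ->]]]].
- exists (xs \o PX), (fun k => ys k \o PY k), alpha; split.
    by apply: Lambda_comp hL => [u|k u]; exists u.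
  rewrite /Lambda_eval /= PX_idem; congr (`|_ + limn (series _)|).
  by apply: funext => k; rewrite PY_y.
- by exists xs, ys, alpha; split; first exact: Lambda_restrict.
Qed.

End Projections.
End SigmaNorm.

Theorem lemma2p3 (R : realType) (X : completeNormedModType R)
  (Y : nat -> completeNormedModType R)
  (N : forall k, X -> Y k -> R)
  (PX : {linear X -> X}) (PY : forall k, {linear Y k -> Y k}) :
  gen_l2_setting N ->
  (forall x, PX (PX x) = PX x) ->
  (forall k y, PY k (PY k y) = PY k y) ->
  (forall k x y, N k (PX x) (PY k y) <= N k x y) ->
  (* (A) *)
  (forall (x : X) (y : forall k, Y k), sq_summable y ->
     sq_summable (fun k => PY k (y k)) /\
     sigma_norm N setT (fun _ => setT) (PX x) (fun k => PY k (y k))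
       <= sigma_norm N setT (fun _ => setT) x y)
  /\
  (* (B) *)
  (forall (x : X) (y : forall k, Y k),
     range PX x -> (forall k, range (PY k) (y k)) -> sq_summable y ->
     sigma_norm N (range PX) (fun k => range (PY k)) x y
       = sigma_norm N setT (fun _ => setT) x y).
Proof.
move=> hN PX_idem PY_idem P_contraction; split=> [x y y_sq|x y x_range y_range _].
- split; first exact: sq_summable_proj.
  exact: sigma_norm_proj_le.
- exact: sigma_norm_range.
Qed.
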